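(* Let $\Pi$, $y_n$, $\rho$, $\gamma$ be as in the context and $r>0$. The system of equations \[b_n=y_n-\frac1\gamma+\frac{\rho}{r\gamma}-\frac{1}{\gamma r}\sum_{n'=1}^N\pi_{nn'}e^{\gamma(b_n-b_{n'})},\quad n\in\{1,\dots,N\},\] has a unique solution $(b_1,\dots,b_N)\in\mathbb R^N$. The solution varies continuously with $r>0$, and $\min_n b_n\to\infty$ as $r$ decreases to zero.
   Context: $\Pi=(\pi_{nn'})$ is an $N\times N$ irreducible infinitesimal generator matrix (nonnegative off-diagonal entries, rows summing to zero, and for every nonempty proper subset $\mathcal M\subset\{1,\dots,N\}$ there are $n\in\mathcal M$, $n'\notin\mathcal M$ with $\pi_{nn'}\ne0$). $y_1,\dots,y_N$ are real numbers and $\rho,\gamma>0$. *)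

From HB Require Import structures.
From mathcomp Require Import all_boot all_order all_algebra.
From mathcomp Require Import all_classical all_reals all_analysis.
Set Implicit Arguments. Unset Strict Implicit. Unset Printing Implicit Defensive.
Import Order.TTheory GRing.Theory Num.Theory.
Local Open Scope ring_scope.

Definition is_generator (R : realType) (N : nat) (Pi : 'M[R]_N) : Prop :=
  (forall n n' : 'I_N, n != n' -> 0 <= Pi n n') /\
  (forall n : 'I_N, \sum_(n' < N) Pi n n' = 0).

Definition generator_irreducible (R : realType) (N : nat) (Pi : 'M[R]_N) : Prop :=
  forall M : {set 'I_N}, M != finset.set0 -> M != [set: 'I_N] ->
    exists n n' : 'I_N, [/\ n \in M, n' \notin M & Pi n n' != 0].

Definition solves_system (R : realType) (N : nat) (Pi : 'M[R]_N) (y : 'I_N -> R)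
    (rho gamma r : R) (b : 'I_N -> R) : Prop :=
  forall n : 'I_N,
    b n = y n - 1 / gamma + rho / (r * gamma)
          - 1 / (gamma * r) * \sum_(n' < N) Pi n n' * expR (gamma * (b n - b n')).

From HB Require Import structures.
From mathcomp Require Import all_boot all_order all_algebra.
From mathcomp Require Import all_classical all_reals all_analysis.
From mathcomp Require Import ring lra.
Import Order.TTheory GRing.Theory Num.Theory.
Import numFieldNormedType.Exports.
Local Open Scope classical_set_scope.
Local Open Scope ring_scope.
Set Implicit Arguments. Unset Strict Implicit. Unset Printing Implicit Defensive.

(* Write the n-th equation as [residual A b n = 0], where
   [residual A b n = b n - A n + k * \sum_n' Pi n n' * expR (g * (b n - b n'))].
   Since the off-diagonal rates are nonnegative, the residual is increasing in
   [b n] and nonincreasing in the other coordinates; evaluating it at a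
   maximiser of [b - c] gives the comparison principle
   [max (b - c) <= max (residual A b - residual A c)].  This yields uniqueness,
   the stability estimate [|c - b| <= max |residual A c|] for a solution [b],
   and, by comparison with constants, the bound [min A <= b], which blows up as
   [r -> 0] because [A] contains [rho / (r * gamma)].  Existence follows from
   Perron's method: the componentwise supremum of the subsolutions bounded from
   below is a solution, the exponential sums being locally Lipschitz.  Finally
   the solution for [r] has residual [(1 - r / s) * (b - y + 1 / gamma)] in the
   system for [s], which gives continuity in [r]. *)

Lemma expR_sub1_le (R : realType) (s : R) : expR s - 1 <= s * expR s.
Proof.
have e : expR (- s) * expR s = 1 by rewrite -expRD addNr expR0.
have : (1 - s) * expR s <= expR (- s) * expR s.
  by rewrite ler_pM2r ?expR_gt0 //; have := expR_ge1Dx (- s); lra.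
by rewrite e; lra.
Qed.

Lemma expR_increment_le (R : realType) (g x u W t : R) :
  0 <= g -> 0 <= t <= 1 -> u <= x + t -> x <= W ->
  expR (g * u) - expR (g * x) <= expR (g * W) * g * expR g * t.
Proof.
move=> g_ge0 /andP[t_ge0 t_le1] ux xW.
have gt_ge0 : 0 <= g * t by rewrite mulr_ge0.
have eu : expR (g * u) <= expR (g * x) * expR (g * t).
  by rewrite -expRD -mulrDr ler_expR ler_wpM2l.
have ex : expR (g * x) <= expR (g * W) by rewrite ler_expR ler_wpM2l.
have et : expR (g * t) <= expR g by rewrite ler_expR ler_piMr.
have ex_ge0 := expR_ge0 (g * x).
have h1 : expR (g * x) * (expR (g * t) - 1) <= expR (g * x) * (g * t * expR (g * t)).
  by rewrite ler_wpM2l ?expR_sub1_le.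
have h2 : expR (g * x) * (g * t * expR (g * t)) <= expR (g * W) * (g * t * expR g).
  by rewrite ler_pM ?mulr_ge0 ?expR_ge0 ?ler_wpM2l.
have -> : expR (g * W) * g * expR g * t = expR (g * W) * (g * t * expR g) by ring.
lra.
Qed.

Lemma le0_of_le_mulr (R : realFieldType) (C x : R) : 0 <= C ->
  (forall t, 0 < t -> t <= 1 -> x <= C * t) -> x <= 0.
Proof.
move=> C_ge0 xC; rewrite leNgt; apply/negP => x_gt0.
have D_gt0 : 0 < 1 + C + x by lra.
have := xC (x / (1 + C + x)).
rewrite divr_gt0 // ler_pdivrMr // mul1r mulrA ler_pdivlMr //.
nra.
Qed.

Section Residual.
Variables (R : realType) (N : nat) (Pi : 'M[R]_N) (g k : R).
Hypothesis Pi_ge0 : forall n n' : 'I_N, n != n' -> 0 <= Pi n n'.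
Hypothesis Pi_row0 : forall n : 'I_N, \sum_(n' < N) Pi n n' = 0.
Hypotheses (g_ge0 : 0 <= g) (k_ge0 : 0 <= k).

Definition expsum (b : 'I_N -> R) (n : 'I_N) : R :=
  \sum_(n' < N) Pi n n' * expR (g * (b n - b n')).

Definition residual (A b : 'I_N -> R) (n : 'I_N) : R :=
  b n - A n + k * expsum b n.

Lemma expsum_le b c n :
  (forall n', c n - c n' <= b n - b n') -> expsum c n <= expsum b n.
Proof.
move=> cb; apply: ler_sum => n' _.
have [->|nn'] := eqVneq n n'; first by rewrite !subrr.
by rewrite ler_wpM2l ?Pi_ge0 // ler_expR ler_wpM2l.
Qed.

Lemma expsum_lipschitz (W : R) n : exists2 L, 0 <= L & forall b c (t : R),
  0 <= t <= 1 -> (forall n', c n - c n' <= b n - b n' + t) ->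
  (forall n', b n - b n' <= W) -> expsum c n - expsum b n <= L * t.
Proof.
pose K := expR (g * W) * g * expR g.
have K_ge0 : 0 <= K by rewrite !mulr_ge0 ?expR_ge0.
exists ((\sum_(n' < N) `|Pi n n'|) * K).
  by rewrite mulr_ge0 // sumr_ge0.
move=> b c t t01 cb bW; rewrite -sumrB -mulrA mulr_suml; apply: ler_sum => n' _.
have [<-|nn'] := eqVneq n n'.
  by rewrite !subrr mulr_ge0 ?mulr_ge0 //; case/andP: t01.
rewrite -mulrBr ger0_norm ?Pi_ge0 // ler_wpM2l ?Pi_ge0 //.
exact: expR_increment_le.
Qed.

Lemma residual_comparison A b c m :
  exists n, b m - c m <= residual A b n - residual A c n.
Proof.
have [n _ bc_max] := @arg_maxP _ R _ m xpredT (fun i => b i - c i) isT.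
exists n; rewrite /residual.
have : k * expsum c n <= k * expsum b n.
  by rewrite ler_wpM2l // expsum_le // => n'; have /= := bc_max n' isT; lra.
have /= := bc_max m isT; lra.
Qed.

Lemma residual_dist_le A b c (e : R) n :
  (forall i, residual A b i = 0) -> (forall i, `|residual A c i| <= e) ->
  `|c n - b n| <= e.
Proof.
move=> b0 ce; rewrite ler_norml.
have [i ci] := residual_comparison A c b n.
have [j bj] := residual_comparison A b c n.
move: ci bj; rewrite !b0 => ci bj.
have /ler_normlP[_ ?] := ce i; have /ler_normlP[? _] := ce j.
apply/andP; split; lra.
Qed.

Lemma residual_const A K n : residual A (fun=> K) n = K - A n.
Proof.
rewrite /residual /expsum.
under eq_bigr do rewrite subrr mulr0 expR0 mulr1.
by rewrite Pi_row0 mulr0 addr0.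
Qed.

Lemma subsolution_le A b K m :
  (forall i, residual A b i <= 0) -> (forall i, A i <= K) -> b m <= K.
Proof.
move=> b_sub AK; have [n] := residual_comparison A b (fun=> K) m.
by rewrite residual_const; have := b_sub n; have := AK n; lra.
Qed.

Lemma solution_ge A b n :
  (forall i, residual A b i = 0) -> exists i, A i <= b n.
Proof.
move=> b0; have [i] := residual_comparison A (fun=> 0) b n.
by rewrite residual_const b0; exists i; lra.
Qed.
End Residual.

Section Perron.
Variables (R : realType) (N : nat) (Pi : 'M[R]_N) (g k : R) (A : 'I_N -> R).
Variables Klo Khi : R.
Hypothesis Pi_ge0 : forall n n' : 'I_N, n != n' -> 0 <= Pi n n'.
Hypothesis Pi_row0 : forall n : 'I_N, \sum_(n' < N) Pi n n' = 0.
Hypotheses (g_ge0 : 0 <= g) (k_ge0 : 0 <= k).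
Hypothesis A_bounds : forall i, Klo <= A i <= Khi.

Let res := residual Pi g k A.
Let subsolution (b : 'I_N -> R) := (forall i, Klo <= b i) /\ (forall i, res b i <= 0).
Let perron i := sup [set b i | b in subsolution].

Let subsolution_le_Khi b i : subsolution b -> b i <= Khi.
Proof.
case=> _ b_sub; apply: (subsolution_le Pi_ge0 Pi_row0 g_ge0 k_ge0 _ b_sub).
by move=> j; case/andP: (A_bounds j).
Qed.

Let subsolution_Klo : subsolution (fun=> Klo).
Proof.
split=> // j; rewrite /res residual_const //.
by case/andP: (A_bounds j); lra.
Qed.

Let perron_has_sup i : has_sup [set b i | b in subsolution].
Proof.
split; first by exists Klo, (fun=> Klo).
by exists Khi => _ [b b_sub <-]; exact: subsolution_le_Khi.
Qed.

Let le_perron b i : subsolution b -> b i <= perron i.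
Proof. by move=> b_sub; apply: sup_upper_bound => //; exists b. Qed.

Let perron_bounds i : Klo <= perron i <= Khi.
Proof.
rewrite (le_perron i subsolution_Klo) /=.
apply: ge_sup; first exact: (perron_has_sup i).1.
by move=> _ [b b_sub <-]; exact: subsolution_le_Khi.
Qed.

Let perron_subsolution n : res perron n <= 0.
Proof.
have [L L_ge0 expsum_lip] := expsum_lipschitz Pi_ge0 g_ge0 (Khi - Klo) n.
apply: (@le0_of_le_mulr _ (1 + k * L)) => [|t t_gt0 t_le1].
  by rewrite addr_ge0 ?mulr_ge0.
have [_ [b b_sub <-] perron_lt] := sup_adherent t_gt0 (perron_has_sup n).
have : expsum Pi g perron n - expsum Pi g b n <= L * t.
  apply: expsum_lip => [|n'|n']; first by apply/andP; split; lra.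
    by have := le_perron n' b_sub; rewrite /perron; lra.
  by have := subsolution_le_Khi n b_sub; have := b_sub.1 n'; lra.
move/(ler_wpM2l k_ge0); have := b_sub.2 n; rewrite /res /residual /perron; lra.
Qed.

Let perron_supersolution n : 0 <= res perron n.
Proof.
have [L L_ge0 expsum_lip] := expsum_lipschitz Pi_ge0 g_ge0 (Khi - Klo) n.
rewrite -oppr_le0; apply: (@le0_of_le_mulr _ (1 + k * L)) => [|t t_gt0 t_le1].
  by rewrite addr_ge0 ?mulr_ge0.
rewrite leNgt; apply/negP => res_lt.
pose b i := if i == n then perron n + t else perron i.
have perron_le_b i : perron i <= b i by rewrite /b; case: eqP => [->|_]; lra.
suff : b n <= perron n by rewrite /b eqxx; lra.
apply: le_perron; split=> [i|m].
  by have := perron_le_b i; have /andP[] := perron_bounds i; lra.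
have [->|mn] := eqVneq m n.
  have : expsum Pi g b n - expsum Pi g perron n <= L * t.
    apply: expsum_lip => [|n'|n']; first by apply/andP; split; lra.
      by have := perron_le_b n'; rewrite /b eqxx; lra.
    by have /andP[? ?] := perron_bounds n; have /andP[? ?] := perron_bounds n'; lra.
  move/(ler_wpM2l k_ge0); move: res_lt; rewrite /res /residual {2}/b eqxx; lra.
have bm : b m = perron m by rewrite /b (negbTE mn).
have : k * expsum Pi g b m <= k * expsum Pi g perron m.
  by rewrite ler_wpM2l // expsum_le // => n'; have := perron_le_b n'; lra.
have := perron_subsolution m; rewrite /res /residual bm; lra.
Qed.

Lemma residual_eq0_exists : exists b, forall n, residual Pi g k A b n = 0.
Proof.
by exists perron => n; apply/eqP; rewrite eq_le perron_subsolution perron_supersolution.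
Qed.
End Perron.

Section System.
Variables (R : realType) (N : nat) (Pi : 'M[R]_N) (y : 'I_N -> R) (rho gamma : R).
Hypothesis Pi_gen : is_generator Pi.
Hypothesis gamma_gt0 : 0 < gamma.

Definition system_rhs (r : R) (i : 'I_N) : R := y i - 1 / gamma + rho / (r * gamma).

Local Notation res r := (residual Pi gamma (1 / (gamma * r)) (system_rhs r)).

Let gamma_ge0 : 0 <= gamma. Proof. exact: ltW. Qed.
Let k_ge0 (r : R) : 0 < r -> 0 <= 1 / (gamma * r).
Proof. by move=> r_gt0; rewrite ltW // divr_gt0 // mulr_gt0. Qed.

Lemma solves_systemE (r : R) b :
  solves_system Pi y rho gamma r b <-> forall n, res r b n = 0.
Proof.
rewrite /solves_system /residual /expsum /system_rhs.
by split=> b_sol n; have := b_sol n; lra.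
Qed.

Lemma residual_rescale (r s : R) b n : 0 < r -> 0 < s ->
  res s b n = (1 - r / s) * (b n - y n + 1 / gamma) + r / s * res r b n.
Proof.
move=> r_gt0 s_gt0; rewrite /residual /system_rhs.
by field; rewrite !gt_eqF.
Qed.

Lemma solves_system_exists (r : R) : 0 < r -> exists b, solves_system Pi y rho gamma r b.
Proof.
move=> r_gt0; case: Pi_gen => Pi_ge0 Pi_row0.
pose K := \big[Num.max/0]_i `|system_rhs r i|.
have rhs_bounds i : - K <= system_rhs r i <= K.
  by rewrite -ler_norml; apply: le_bigmax.
have [b b_sol] := residual_eq0_exists Pi_ge0 Pi_row0 gamma_ge0 (k_ge0 r_gt0) rhs_bounds.
by exists b; apply/solves_systemE.
Qed.

Lemma solves_system_uniq (r : R) b c : 0 < r ->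
  solves_system Pi y rho gamma r b -> solves_system Pi y rho gamma r c ->
  forall n, c n = b n.
Proof.
move=> r_gt0 /solves_systemE b_sol /solves_systemE c_sol n; case: Pi_gen => Pi_ge0 _.
apply/eqP; rewrite -subr_eq0 -normr_le0.
by apply: (residual_dist_le Pi_ge0 gamma_ge0 (k_ge0 r_gt0) n b_sol) => i; rewrite c_sol normr0.
Qed.

Lemma solution_dist_le (r s : R) b c n : 0 < r -> 0 < s ->
  solves_system Pi y rho gamma r b -> solves_system Pi y rho gamma s c ->
  `|b n - c n| <= (\big[Num.max/0]_i `|b i - y i + 1 / gamma|) * `|1 - r / s|.
Proof.
move=> r_gt0 s_gt0 /solves_systemE b_sol /solves_systemE c_sol; case: Pi_gen => Pi_ge0 _.
apply: (residual_dist_le Pi_ge0 gamma_ge0 (k_ge0 s_gt0) n c_sol) => i.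
rewrite (residual_rescale _ _ r_gt0) // b_sol mulr0 addr0 normrM [X in X <= _]mulrC.
by rewrite ler_wpM2r // le_bigmax.
Qed.

Lemma solution_continuous (f : R -> 'I_N -> R) :
  (forall r : R, 0 < r -> solves_system Pi y rho gamma r (f r)) ->
  forall (r : R) n, 0 < r -> f s n @[s --> r] --> f r n.
Proof.
move=> f_sol r n r_gt0.
pose C : R := \big[Num.max/0]_i `|f r i - y i + 1 / gamma|.
have err_cvg : C * `|1 - r / s| @[s --> r] --> 0.
  have ratio_cvg : r / s @[s --> r] --> (1 : R).
    rewrite -(mulfV (lt0r_neq0 r_gt0)); apply: cvgMl_tmp.
    exact: (inv_continuous (lt0r_neq0 r_gt0)).
  have -> : (0 : R) = C * `|1 - 1| by rewrite subrr normr0 mulr0.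
  by apply: cvgMl_tmp; apply: cvg_norm; exact: (cvgB (cvg_cst _) ratio_cvg).
have lower : f r n - C * `|1 - r / s| @[s --> r] --> f r n.
  by rewrite -{2}(subr0 (f r n)); apply: cvgB => //; exact: cvg_cst.
have upper : f r n + C * `|1 - r / s| @[s --> r] --> f r n.
  by rewrite -{2}(addr0 (f r n)); apply: cvgD => //; exact: cvg_cst.
apply: (squeeze_cvgr _ lower upper); near=> s.
have s_gt0 : 0 < s by near: s; exact: lt_nbhsr.
by rewrite -ler_distlC; apply: solution_dist_le => //; apply: f_sol.
Unshelve. all: by end_near.
Qed.

Lemma solution_ge_rhs (r : R) b n : 0 < r ->
  solves_system Pi y rho gamma r b -> exists i, system_rhs r i <= b n.
Proof.
move=> r_gt0 /solves_systemE b_sol; case: Pi_gen => Pi_ge0 Pi_row0.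
exact: (solution_ge Pi_ge0 Pi_row0 gamma_ge0 (k_ge0 r_gt0) n b_sol).
Qed.

Lemma solution_blowup (f : R -> 'I_N -> R) : 0 < rho ->
  (forall r : R, 0 < r -> solves_system Pi y rho gamma r (f r)) ->
  forall M : R, exists2 delta : R, 0 < delta &
    forall r : R, 0 < r -> r < delta -> forall n, M < f r n.
Proof.
move=> rho_gt0 f_sol M.
pose K : R := \big[Num.max/0]_i (M - y i + 1 / gamma).
have K_ge0 : 0 <= K by exact: bigmax_ge_id.
exists (rho / (gamma * (K + 1))) => [|r r_gt0 r_lt n].
  by rewrite divr_gt0 // mulr_gt0 // ltr_wpDl.
have [i] := solution_ge_rhs n r_gt0 (f_sol r r_gt0).
have : M - y i + 1 / gamma <= K by exact: le_bigmax.
have : K + 1 < rho / (r * gamma).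
  rewrite ltr_pdivlMr ?mulr_gt0 //.
  have -> : (K + 1) * (r * gamma) = r * (gamma * (K + 1)) by ring.
  by rewrite -ltr_pdivlMr // mulr_gt0 // ltr_wpDl.
rewrite /system_rhs; lra.
Qed.

End System.

Theorem lemma2 (R : realType) (N : nat) (Pi : 'M[R]_N) (y : 'I_N -> R)
    (rho gamma : R) :
  is_generator Pi -> generator_irreducible Pi -> 0 < rho -> 0 < gamma ->
  exists b : R -> 'I_N -> R,
    (* unique solution for each r > 0 *)
    (forall r : R, 0 < r ->
       solves_system Pi y rho gamma r (b r) /\
       (forall c : 'I_N -> R, solves_system Pi y rho gamma r c ->
          forall n, c n = b r n)) /\
    (* continuity in r on (0, +oo) (componentwise = in R^N) *)
    (forall (r : R) (n : 'I_N), 0 < r -> (b s n @[s --> r] --> b r n)) /\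
    (* min_n b_n -> +oo as r decreases to 0 *)
    (forall M : R, exists2 delta : R, 0 < delta &
       forall r : R, 0 < r -> r < delta -> forall n : 'I_N, M < b r n).
Proof.
move=> Pi_gen _ rho_gt0 gamma_gt0.
have sol_exists (r : R) : exists b, 0 < r -> solves_system Pi y rho gamma r b.
  have [r_gt0|_] := boolP (0 < r); last by exists (fun=> 0).
  by have [b b_sol] := solves_system_exists y rho Pi_gen gamma_gt0 r_gt0; exists b.
have [f f_sol] := choice sol_exists.
exists f; split; [|split].
- move=> r r_gt0; split=> [|c c_sol]; first exact: f_sol.
  exact: (solves_system_uniq Pi_gen gamma_gt0 r_gt0 (f_sol r r_gt0) c_sol).
- by move=> r n; exact: (solution_continuous Pi_gen gamma_gt0 f_sol).
- exact: (solution_blowup Pi_gen gamma_gt0 rho_gt0 f_sol).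
Qed.
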